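(* Let $\mathcal{L}=(R_i:i<k)$ be a finite relational language, $K$ a Fraïssé class of finite $\mathcal{L}$-structures with the Strong Amalgamation Property, $T$ the theory of its Fraïssé limit, and $N=(A,B)$ a monster model of $T_{pfc}$ (with $A$ the universe of sort $O$ and $B$ of sort $P$). For $j=1,\dots,n$ let $\phi_j(x,y_j,z_j)$ be $\mathcal{L}_{pfc}$-formulas where $x$ is a single variable of sort $O$, $y_j$ is a tuple of variables of sort $O$, and $z_j$ is a single variable of sort $P$; let $a_j$ be tuples from $A$ and let $b_1,\dots,b_n\in B$ be pairwise distinct. If each $\phi_j(x,a_j,b_j)$ is non-algebraic (has infinitely many realizations in $N$), then the conjunction $\bigwedge_{j=1}^n\phi_j(x,a_j,b_j)$ is non-algebraic.
   Context: $K$ has SAP if for all $A,B,C\in K$ and embeddings $e:A\to B$, $f:A\to C$ there are $D\in K$ and embeddings $g:B\to D$, $h:C\to D$ with $ge=hf$ and $\mathrm{im}(g)\cap\mathrm{im}(h)=\mathrm{im}(ge)$. If $R_i$ has arity $n_i$, $\mathcal{L}_{pfc}$ is the two-sorted language with sorts $O$ and $P$ and relation symbols $R^i_x(x,y_1,\dots,y_{n_i})$ with $x$ of sort $P$ and $y_1,\dots,y_{n_i}$ of sort $O$. For an $\mathcal{L}_{pfc}$-structure $M=(A,B)$ and $b\in B$, $A_b$ is the $\mathcal{L}$-structure with domain $A$ in which $R_i$ is interpreted as $\{\bar y: R^i(b,\bar y)\}$. $K_{pfc}$ is the class of finite $\mathcal{L}_{pfc}$-structures $(A,B)$ such that $A_b$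 is isomorphic to a member of $K$ for every $b\in B$; it is a Fraïssé class with SAP, and $T_{pfc}$ is the theory of its Fraïssé limit (it has quantifier elimination). *)

From HB Require Import structures.
From Stdlib Require Lists.List.
From mathcomp Require Import all_boot.

Set Implicit Arguments.
Unset Strict Implicit.
Unset Printing Implicit Defensive.

Section PFC.
(* The finite relational language L = (R_i : i < k), R_i of arity ar i. *)
Variable k : nat.
Variable ar : 'I_k -> nat.

Definition Lrel (C : Type) := forall i : 'I_k, (ar i).-tuple C -> Prop.

Definition L_embedding (C D : Type) (RC : Lrel C) (RD : Lrel D) (f : C -> D) : Prop :=
  injective f /\ forall i (ys : (ar i).-tuple C), RC i ys <-> RD i (map_tuple f ys).

Definition L_iso (C D : Type) (RC : Lrel C) (RD : Lrel D) (f : C -> D) : Prop :=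
  L_embedding RC RD f /\ bijective f.

Definition Lclass := forall C : finType, Lrel C -> Prop.

Definition iso_closed (K : Lclass) : Prop :=
  forall (C D : finType) (RC : Lrel C) (RD : Lrel D) (f : C -> D),
    K C RC -> L_iso RC RD f -> K D RD.

Definition HP (K : Lclass) : Prop :=
  forall (C D : finType) (RC : Lrel C) (RD : Lrel D) (f : C -> D),
    K D RD -> L_embedding RC RD f -> K C RC.

Definition JEP (K : Lclass) : Prop :=
  forall (B C : finType) (RB : Lrel B) (RC : Lrel C), K B RB -> K C RC ->
  exists (D : finType) (RD : Lrel D) (g : B -> D) (h : C -> D),
    [/\ K D RD, L_embedding RB RD g & L_embedding RC RD h].

Definition AP (K : Lclass) : Prop :=
  forall (A B C : finType) (RA : Lrel A) (RB : Lrel B) (RC : Lrel C)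
         (e : A -> B) (f : A -> C),
    K A RA -> K B RB -> K C RC -> L_embedding RA RB e -> L_embedding RA RC f ->
  exists (D : finType) (RD : Lrel D) (g : B -> D) (h : C -> D),
    [/\ K D RD, L_embedding RB RD g, L_embedding RC RD h
      & forall x, g (e x) = h (f x)].

Definition SAP (K : Lclass) : Prop :=
  forall (A B C : finType) (RA : Lrel A) (RB : Lrel B) (RC : Lrel C)
         (e : A -> B) (f : A -> C),
    K A RA -> K B RB -> K C RC -> L_embedding RA RB e -> L_embedding RA RC f ->
  exists (D : finType) (RD : Lrel D) (g : B -> D) (h : C -> D),
    [/\ K D RD, L_embedding RB RD g, L_embedding RC RD h,
        forall x, g (e x) = h (f x)
      & forall y z, g y = h z -> exists x, g (e x) = g y].

(* Fraisse class (Hodges): nonempty, closed under isomorphism, HP, JEP, AP.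
   (Countably many isomorphism types is automatic for a finite relational language.) *)
Definition fraisse_class (K : Lclass) : Prop :=
  [/\ exists (C : finType) (RC : Lrel C), K C RC, iso_closed K, HP K, JEP K & AP K].

(* relations R^i(x; y_1..y_{n_i}) with x of sort P, y's of sort O *)
Definition Prel (C D : Type) := forall i : 'I_k, D -> (ar i).-tuple C -> Prop.

Record pfc_struct := PfcStruct {
  sortO : Type;
  sortP : Type;
  prel : Prel sortO sortP }.

Definition pfc_embedding (C1 D1 C2 D2 : Type) (R1 : Prel C1 D1) (R2 : Prel C2 D2)
    (fO : C1 -> C2) (fP : D1 -> D2) : Prop :=
  [/\ injective fO, injective fP &
      forall i (d : D1) (ys : (ar i).-tuple C1), R1 i d ys <-> R2 i (fP d) (map_tuple fO ys)].

Definition pfc_automorphism (M : pfc_struct) (sO : sortO M -> sortO M)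
    (sP : sortP M -> sortP M) : Prop :=
  [/\ bijective sO, bijective sP & pfc_embedding (@prel M) (@prel M) sO sP].

Definition fiber (C D : Type) (R : Prel C D) (b : D) : Lrel C := fun i ys => R i b ys.

Definition Kpfc (K : Lclass) (C D : finType) (R : Prel C D) : Prop :=
  forall b : D, exists (C' : finType) (R' : Lrel C') (f : C -> C'),
    K C' R' /\ L_iso (fiber R b) R' f.

Definition countable_type (T : Type) : Prop := exists f : T -> nat, injective f.

Definition is_pfc_fraisse_limit (K : Lclass) (M : pfc_struct) : Prop :=
  [/\ countable_type (sortO M), countable_type (sortP M),
      (forall (C D : finType) (R : Prel C D),
          Kpfc K R <-> exists fO fP, pfc_embedding R (@prel M) fO fP) &
      (forall (C D : finType) (R : Prel C D) fO fP gO gP,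
          pfc_embedding R (@prel M) fO fP -> pfc_embedding R (@prel M) gO gP ->
          exists sO sP, [/\ @pfc_automorphism M sO sP,
                            forall c, sO (fO c) = gO c &
                            forall d, sP (fP d) = gP d])].

(* Variables are named by nat, in two separate namespaces (sort O and sort P). *)
Inductive pform : Type :=
  | PRel (i : 'I_k) (z : nat) (ys : (ar i).-tuple nat)
  | PEqO (u v : nat)
  | PEqP (u v : nat)
  | PNot (f : pform)
  | PAnd (f g : pform)
  | PExO (v : nat) (f : pform)
  | PExP (v : nat) (f : pform).

Definition upd (T : Type) (e : nat -> T) (v : nat) (x : T) : nat -> T :=
  fun u => if u == v then x else e u.

Fixpoint psat (M : pfc_struct) (eO : nat -> sortO M) (eP : nat -> sortP M)
    (f : pform) : Prop :=
  match f with
  | PRel i z ys => @prel M i (eP z) (map_tuple eO ys)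
  | PEqO u v => eO u = eO v
  | PEqP u v => eP u = eP v
  | PNot g => ~ psat eO eP g
  | PAnd g h => psat eO eP g /\ psat eO eP h
  | PExO v g => exists x, psat (upd eO v x) eP g
  | PExP v g => exists y, psat eO (upd eP v y) g
  end.

(* M and N satisfy the same sentences (= universal closures of formulas) *)
Definition elem_equiv (M N : pfc_struct) : Prop :=
  forall f : pform,
    (forall eO eP, psat (M:=M) eO eP f) <-> (forall eO eP, psat (M:=N) eO eP f).

Definition model_of_Tpfc (K : Lclass) (N : pfc_struct) : Prop :=
  exists M0 : pfc_struct, is_pfc_fraisse_limit K M0 /\ elem_equiv N M0.

End PFC.

Definition finite_pred (T : Type) (P : T -> Prop) : Prop :=
  exists s : seq T, forall x, P x -> List.In x s.

Definition infinite_pred (T : Type) (P : T -> Prop) : Prop := ~ finite_pred P.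

From HB Require Import structures.
From mathcomp Require Import all_boot.
From Stdlib Require Import Classical ClassicalEpsilon FunctionalExtensionality.

(* Suppose all common realizations lie in a finite set s.  Pick in N, for each j,
   a realization x_j of phi_j(x, a_j, b_j) outside s and outside all parameters.
   That such witnesses exist while no common realization avoids s is expressed by
   one formula with parameters, hence also holds in the Fraisse limit M0 of K_pfc,
   since N and M0 are elementarily equivalent.  In M0, let F be s together with the
   parameters.  As K_pfc is defined fibre by fibre, the finite structure with sort O
   equal to F plus a new point * and sort P equal to {b_1, ..., b_n}, whose fibre at
   b_j is the one of M0 on F and x_j with * in place of x_j, lies in K_pfc.
   Ultrahomogeneity embeds it into M0 over F; the image y of * is conjugate to each
   x_j over F and b_j, so it realizes every phi_j outside s, a contradiction. *)

Set Implicit Arguments.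
Unset Strict Implicit.
Unset Printing Implicit Defensive.

Lemma map_tuple_comp (A B C : Type) m (f : A -> B) (g : B -> C) (t : m.-tuple A) :
  map_tuple g (map_tuple f t) = map_tuple (g \o f) t.
Proof. by apply: val_inj; rewrite /= map_comp. Qed.

Lemma upd_comp_inj (T : Type) (e : nat -> T) (r : nat -> nat) (r_inj : injective r) v x :
  upd e (r v) x \o r = upd (e \o r) v x.
Proof. by apply: functional_extensionality => u; rewrite /upd /= (inj_eq r_inj). Qed.

Lemma comp_upd (T U : Type) (f : T -> U) (e : nat -> T) v x :
  f \o upd e v x = upd (f \o e) v (f x).
Proof. by apply: functional_extensionality => u; rewrite /upd /=; case: eqP. Qed.

Lemma In_mem (T : eqType) (x : T) s : List.In x s <-> x \in s.
Proof.
elim: s => [//|y s IH] /=; rewrite IH inE.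
split=> [[->|->]|/orP [/eqP->|->]]; rewrite ?eqxx ?orbT //; by [left | right].
Qed.

Lemma In_nth (T : Type) (d : T) (s : seq T) i : i < size s -> List.In (nth d s i) s.
Proof. by elim: s i => [//|x s IH] [|i] /= hi; [left | right; apply: IH]. Qed.

Lemma nth_In (T : Type) (d : T) (s : seq T) x :
  List.In x s -> exists2 i, i < size s & nth d s i = x.
Proof.
elim: s => [//|y s IH] /= [->|/IH [i hi <-]]; first by exists 0.
by exists i.+1.
Qed.

Lemma notin_nth (T : Type) (d : T) (s : seq T) y :
  ~ List.In y s <-> forall i, i < size s -> y <> nth d s i.
Proof.
split=> [ys i hi yi | ynth /(nth_In d) [i hi yi]]; last exact: ynth hi (esym yi).
by apply: ys; rewrite yi; apply: In_nth.
Qed.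

Lemma In_flatten_map (T : Type) (U : eqType) (f : U -> seq T) (s : seq U) x :
  List.In x (flatten (map f s)) <-> exists2 u, u \in s & List.In x (f u).
Proof.
elim: s => [|u s IH] /=; first by split=> [|[]].
rewrite List.in_app_iff IH; split=> [[hx|[u' hu' hx]]|[u' +]].
- by exists u; rewrite ?mem_head.
- by exists u'; rewrite // inE hu' orbT.
- by rewrite inE => /orP [/eqP-> | hu' hx]; [left | right; exists u'].
Qed.

Lemma In_map_mem (T : Type) (U : eqType) (f : U -> T) (s : seq U) x :
  List.In x (map f s) <-> exists2 u, u \in s & x = f u.
Proof.
elim: s => [|u s IH] /=; first by split=> [|[]].
rewrite IH; split=> [[<-|[u' hu' ->]]|[u' +]].
- by exists u; rewrite ?mem_head.
- by exists u'; rewrite // inE hu' orbT.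
- by rewrite inE => /orP [/eqP-> ->| hu' ->]; [left | right; exists u'].
Qed.

Lemma infinite_pred_avoid (T : Type) (P : T -> Prop) (s : seq T) :
  infinite_pred P -> exists x, P x /\ ~ List.In x s.
Proof.
move=> infP; apply: NNPP => none; apply: infP; exists s => x Px.
by apply: NNPP => xs; apply: none; exists x.
Qed.

Section Syntax.
Variables (k : nat) (ar : 'I_k -> nat).

Fixpoint rename (ro rp : nat -> nat) (f : pform ar) : pform ar :=
  match f with
  | PRel i z ys => PRel (rp z) (map_tuple ro ys)
  | PEqO u v => PEqO ar (ro u) (ro v)
  | PEqP u v => PEqP ar (rp u) (rp v)
  | PNot g => PNot (rename ro rp g)
  | PAnd g h => PAnd (rename ro rp g) (rename ro rp h)
  | PExO v g => PExO (ro v) (rename ro rp g)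
  | PExP v g => PExP (rp v) (rename ro rp g)
  end.

Fixpoint fvO (f : pform ar) : seq nat :=
  match f with
  | PRel _ _ ys => val ys
  | PEqO u v => [:: u; v]
  | PEqP _ _ => [::]
  | PNot g => fvO g
  | PAnd g h => fvO g ++ fvO h
  | PExO v g => [seq u <- fvO g | u != v]
  | PExP _ g => fvO g
  end.

Fixpoint fvP (f : pform ar) : seq nat :=
  match f with
  | PRel _ z _ => [:: z]
  | PEqO _ _ => [::]
  | PEqP u v => [:: u; v]
  | PNot g => fvP g
  | PAnd g h => fvP g ++ fvP h
  | PExO _ g => fvP g
  | PExP v g => [seq u <- fvP g | u != v]
  end.

Definition PTrue : pform ar := PEqO ar 0 0.

Definition PBigAnd (T : Type) (g : T -> pform ar) (s : seq T) : pform ar :=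
  foldr (fun x acc => PAnd (g x) acc) PTrue s.

Variable M : pfc_struct ar.
Implicit Types (f : pform ar) (eO : nat -> sortO M) (eP : nat -> sortP M).

Lemma psat_rename ro rp (ro_inj : injective ro) (rp_inj : injective rp) f eO eP :
  psat eO eP (rename ro rp f) <-> psat (eO \o ro) (eP \o rp) f.
Proof.
elim: f eO eP => [i z ys|u v|u v|g IH|g IHg h IHh|v g IH|v g IH] eO eP /=.
- by rewrite map_tuple_comp.
- by [].
- by [].
- by rewrite IH.
- by rewrite IHg IHh.
- by split=> -[x Hx]; exists x; move: Hx; rewrite IH upd_comp_inj.
- by split=> -[x Hx]; exists x; move: Hx; rewrite IH upd_comp_inj.
Qed.

Lemma psat_agree f eO eO' eP eP' :
  {in fvO f, eO =1 eO'} -> {in fvP f, eP =1 eP'} ->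
  psat eO eP f <-> psat eO' eP' f.
Proof.
elim: f eO eO' eP eP' => [i z ys|u v|u v|g IH|g IHg h IHh|v g IH|v g IH]
    eO eO' eP eP' agO agP /=.
- rewrite agP ?mem_head //; suff -> : map_tuple eO ys = map_tuple eO' ys by [].
  by apply: val_inj; apply/eq_in_map => u hu; apply: agO.
- by rewrite !agO ?inE ?eqxx ?orbT.
- by rewrite !agP ?inE ?eqxx ?orbT.
- by rewrite (IH eO eO' eP eP').
- have agOg : {in fvO g, eO =1 eO'} by move=> u hu; apply: agO; rewrite mem_cat hu.
  have agOh : {in fvO h, eO =1 eO'} by move=> u hu; apply: agO; rewrite mem_cat hu orbT.
  have agPg : {in fvP g, eP =1 eP'} by move=> u hu; apply: agP; rewrite mem_cat hu.
  have agPh : {in fvP h, eP =1 eP'} by move=> u hu; apply: agP; rewrite mem_cat hu orbT.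
  by rewrite (IHg _ _ _ _ agOg agPg) (IHh _ _ _ _ agOh agPh).
- suff E x : psat (upd eO v x) eP g <-> psat (upd eO' v x) eP' g.
    by split=> -[x Hx]; exists x; apply/E.
  apply: IH => // u hu; rewrite /upd; case: eqP => // /eqP ne.
  by apply: agO; rewrite mem_filter ne.
- suff E x : psat eO (upd eP v x) g <-> psat eO' (upd eP' v x) g.
    by split=> -[x Hx]; exists x; apply/E.
  apply: IH => // u hu; rewrite /upd; case: eqP => // /eqP ne.
  by apply: agP; rewrite mem_filter ne.
Qed.

Lemma psat_auto sO sP (s_auto : pfc_automorphism sO sP) f eO eP :
  psat (sO \o eO) (sP \o eP) f <-> psat eO eP f.
Proof.
case: s_auto => [[tO sOK tOK] [tP sPK tPK] [sO_inj sP_inj s_rel]].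
elim: f eO eP => [i z ys|u v|u v|g IH|g IHg h IHh|v g IH|v g IH] eO eP /=.
- by rewrite -map_tuple_comp; symmetry; apply: s_rel.
- by split=> [/sO_inj|->].
- by split=> [/sP_inj|->].
- by rewrite IH.
- by rewrite IHg IHh.
- split=> -[x Hx]; last by exists (sO x); rewrite -comp_upd IH.
  by exists (tO x); rewrite -IH comp_upd tOK.
- split=> -[x Hx]; last by exists (sP x); rewrite -comp_upd IH.
  by exists (tP x); rewrite -IH comp_upd tPK.
Qed.

Lemma psat_transport sO sP (s_auto : pfc_automorphism sO sP) f eO eO' eP eP' :
  {in fvO f, sO \o eO =1 eO'} -> {in fvP f, sP \o eP =1 eP'} ->
  psat eO eP f -> psat eO' eP' f.
Proof. by move=> agO agP; rewrite -(psat_auto s_auto) (psat_agree agO agP). Qed.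

Lemma psat_and f g eO eP : psat eO eP (PAnd f g) <-> psat eO eP f /\ psat eO eP g.
Proof. by []. Qed.

Lemma psat_bigand (T : eqType) (g : T -> pform ar) s eO eP :
  psat eO eP (PBigAnd g s) <-> forall x, x \in s -> psat eO eP (g x).
Proof.
elim: s => [|y s IH] /=; first by split.
rewrite IH; split=> [[gy gs] x|gs].
  by rewrite inE => /orP [/eqP->|/gs].
by split=> [|x xs]; apply: gs; rewrite inE ?eqxx ?xs ?orbT.
Qed.

End Syntax.

Lemma seq_enum_countable (T : Type) (c : T -> nat) (c_inj : injective c) (s : seq T) :
  exists m (e : 'I_m -> T), injective e /\ forall y, List.In y s <-> exists i, e i = y.
Proof.
pose t := in_tuple (undup (s : seq (inj_type c_inj))).
exists (size (undup (s : seq (inj_type c_inj)))), (tnth t); split.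
  by apply/(tuple_uniqP t)/undup_uniq.
move=> y; rewrite (In_mem (y : inj_type c_inj)) -mem_undup.
by split=> [/(tnthP t) [i ->]|[i <-]]; [exists i | exact: mem_tnth].
Qed.

Lemma inj_from_unit (T : Type) (f : unit -> T) : injective f.
Proof. by move=> [] []. Qed.

Lemma pfc_embedding_comp k (ar : 'I_k -> nat) (C1 D1 C2 D2 C3 D3 : Type)
    (R1 : Prel ar C1 D1) (R2 : Prel ar C2 D2) (R3 : Prel ar C3 D3) fO fP gO gP :
  pfc_embedding R1 R2 fO fP -> pfc_embedding R2 R3 gO gP ->
  pfc_embedding R1 R3 (gO \o fO) (gP \o fP).
Proof.
case=> fO_inj fP_inj fR [gO_inj gP_inj gR]; split; try exact: inj_comp.
by move=> i d ys; rewrite fR gR map_tuple_comp.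
Qed.

Section FraisseLimit.
Variables (k : nat) (ar : 'I_k -> nat) (K : Lclass ar) (M : pfc_struct ar).
Hypothesis M_lim : is_pfc_fraisse_limit K M.

Definition pullback (C D : Type) (fO : C -> sortO M) (fP : D -> sortP M) : Prel ar C D :=
  fun i d ys => @prel _ _ M i (fP d) (map_tuple fO ys).

Lemma pullback_embedding (C D : Type) (fO : C -> sortO M) (fP : D -> sortP M) :
  injective fO -> injective fP -> pfc_embedding (pullback fO fP) (@prel _ _ M) fO fP.
Proof. by split. Qed.

Lemma Kpfc_of_fibres (C D : finType) (R : Prel ar C D) :
  (forall d : D, exists fO (fP : unit -> sortP M),
      pfc_embedding (fun i (_ : unit) => R i d) (@prel _ _ M) fO fP) ->
  Kpfc K R.
Proof.
case: M_lim => _ _ age _ emb d; have [fO [fP embd]] := emb d.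
exact: ((age _ _ _).2 (ex_intro _ fO (ex_intro _ fP embd)) tt).
Qed.

Lemma conjugate_points_over_fibres n (b : 'I_n -> sortP M) (b_inj : injective b)
    (F : seq (sortO M)) (x : 'I_n -> sortO M) :
  (forall j, ~ List.In (x j) F) ->
  exists y, ~ List.In y F /\ forall j, exists sO sP,
    [/\ pfc_automorphism sO sP, sO (x j) = y, sP (b j) = b j
      & forall c, List.In c F -> sO c = c].
Proof.
move=> xF; case: (M_lim) => [[cO cO_inj] _ age homog].
have [m [e [e_inj eF]]] := seq_enum_countable cO_inj F.
pose ext j (o : option 'I_m) := if o is Some i then e i else x j.
have ext_inj j : injective (ext j).
  have ex i : e i <> x j by move=> exj; apply: (xF j); rewrite -exj eF; exists i.
  by case=> [i|] [i'|] //= => [/e_inj-> | /ex | /esym/ex].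
(* The fibre of [T] at [j] is that of [M] at [b j] on [F] and [x j], with the new
   point [None] in the role of [x j]. *)
pose T : Prel ar (option 'I_m) 'I_n :=
  fun i j ys => @prel _ _ M i (b j) (map_tuple (ext j) ys).
have [fO [fP embT]] : exists fO fP, pfc_embedding T (@prel _ _ M) fO fP.
  apply/(age _ _ _).1/Kpfc_of_fibres => j.
  by exists (ext j), (fun _ => b j); exact/pullback_embedding/inj_from_unit.
have [sO [sP [s_auto sOe sPb]]] : exists sO sP, [/\ pfc_automorphism sO sP,
    forall i, sO (fO (Some i)) = e i & forall j, sP (fP j) = b j].
  apply: (homog _ _ (pullback e b)); last exact: pullback_embedding.
  apply: (pfc_embedding_comp (fO := Some) (fP := id)) embT.
  by split=> // [? ? []|i j ys] //; rewrite /T /pullback map_tuple_comp.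
have embsT : pfc_embedding T (@prel _ _ M) (sO \o fO) (sP \o fP).
  by apply: pfc_embedding_comp embT _; case: s_auto.
exists (sO (fO None)); split=> [yF | j].
  have [i ei] := (eF _).1 yF.
  by case: embsT => + _ _ => /(_ None (Some i)); rewrite /= sOe ei => /(_ erefl).
have embj : pfc_embedding (fun i (_ : unit) => T i j) (@prel _ _ M)
    (sO \o fO) (fun _ => sP (fP j)).
  by case: embsT => sfO_inj _ sfT; split=> //; exact: inj_from_unit.
have embx : pfc_embedding (fun i (_ : unit) => T i j) (@prel _ _ M)
    (ext j) (fun _ => b j).
  exact/pullback_embedding/inj_from_unit.
have [tO [tP [t_auto tOe tPb]]] := homog _ _ _ _ _ _ _ embx embj.
exists tO, tP; split=> //; first by rewrite (tOe None).
- by rewrite (tPb tt) /= sPb.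
- by move=> c /eF [i <-]; rewrite (tOe (Some i)) /= sOe.
Qed.

Lemma fraisse_limit_common_realization n (phi : 'I_n -> pform ar)
    (a : 'I_n -> nat -> sortO M) (b : 'I_n -> sortP M) (b_inj : injective b)
    (F : seq (sortO M)) (x : 'I_n -> sortO M) :
  (forall j v, v \in fvO (phi j) -> v != 0 -> List.In (a j v) F) ->
  (forall j, ~ List.In (x j) F) ->
  (forall j, psat (upd (a j) 0 (x j)) (fun _ => b j) (phi j)) ->
  exists y, ~ List.In y F /\ forall j, psat (upd (a j) 0 y) (fun _ => b j) (phi j).
Proof.
move=> a_F xF xphi; have [y [yF conj]] := conjugate_points_over_fibres b_inj xF.
exists y; split=> // j; have [sO [sP [s_auto sOx sPb sOF]]] := conj j.
apply: (psat_transport s_auto _ _ (xphi j)) => [v vphi | w _] /=; last exact: sPb.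
rewrite /upd; case: eqP => [// | /eqP v0]; exact/sOF/a_F.
Qed.

End FraisseLimit.

Section ConfigFormula.
Variables (k : nat) (ar : 'I_k -> nat) (n : nat) (phi : 'I_n -> pform ar).

Definition param_vars (j : 'I_n) : seq nat := [seq v <- fvO (phi j) | v != 0].

Definition params (T : Type) (a : 'I_n -> nat -> T) : seq T :=
  flatten [seq [seq a j v | v <- param_vars j] | j <- enum 'I_n].

Lemma In_params (T : Type) (a : 'I_n -> nat -> T) y :
  List.In y (params a) <-> exists j v, [/\ v \in fvO (phi j), v != 0 & y = a j v].
Proof.
rewrite In_flatten_map; split=> [[j _ /In_map_mem [v]] | [j [v [vphi v0 ->]]]].
  by rewrite mem_filter => /andP [v0 vphi] ->; exists j, v.
by exists j; rewrite ?mem_enum //; apply/In_map_mem; exists v; rewrite // mem_filter v0.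
Qed.

(* The shape of a counterexample, once its finite set [cs] of common realizations
   and witnesses [x j] for the [phi j] are fixed. *)
Definition isolated_config (M : pfc_struct ar) (a : 'I_n -> nat -> sortO M)
    (b : 'I_n -> sortP M) (x : 'I_n -> sortO M) (cs : seq (sortO M)) : Prop :=
  [/\ injective b,
      forall j, psat (upd (a j) 0 (x j)) (fun _ => b j) (phi j),
      forall j, ~ List.In (x j) (cs ++ params a)
    & ~ exists y, (forall j, psat (upd (a j) 0 y) (fun _ => b j) (phi j)) /\ ~ List.In y cs].

Lemma fraisse_limit_no_isolated_config (K : Lclass ar) (M : pfc_struct ar) a b x cs :
  is_pfc_fraisse_limit K M -> ~ @isolated_config M a b x cs.
Proof.
move=> M_lim [b_inj xphi xF none]; apply: none.
have a_F j v : v \in fvO (phi j) -> v != 0 -> List.In (a j v) (cs ++ params a).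
  by move=> vphi v0; apply/List.in_or_app; right; apply/In_params; exists j, v.
have [y [yF yphi]] := fraisse_limit_common_realization M_lim b_inj a_F xF xphi.
by exists y; split=> // ycs; apply: yF; apply/List.in_or_app; left.
Qed.

Hypothesis n_gt0 : 0 < n.
Variable m : nat.

(* Variable layout of [config_formula]: the copy of [phi j] uses the even O-variables
   [varO j v] and the P-variables [slot j w]; the list [cs] sits at the odd O-variables
   [varC i] >= 3; the O-variable 1 is bound to a candidate common realization, which
   [varO1 j] substitutes for the variable 0 of [phi j]. *)
Definition slot (j v : nat) : nat := v * n + j.
Definition varO (j v : nat) : nat := (slot j v).*2.
Definition varO1 (j v : nat) : nat := if v == 0 then 1 else varO j v.
Definition varC (i : nat) : nat := i.*2.+3.

Lemma slot_inj (j : 'I_n) : injective (slot j).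
Proof. by move=> v v' /addIn /eqP; rewrite eqn_pmul2r // => /eqP. Qed.

Lemma varO_inj (j : 'I_n) : injective (varO j).
Proof. by move=> v v' /double_inj /slot_inj. Qed.

Lemma varO_neq1 j v : varO j v != 1.
Proof. by apply/eqP => /(congr1 odd); rewrite /varO odd_double. Qed.

Lemma varO1_inj (j : 'I_n) : injective (varO1 j).
Proof.
move=> v v'; rewrite /varO1; case: eqP => [->|_]; case: eqP => [->|_] //.
- by move=> /esym/eqP; rewrite (negbTE (varO_neq1 _ _)).
- by move=> /eqP; rewrite (negbTE (varO_neq1 _ _)).
- exact: varO_inj.
Qed.

Lemma upd_varO1 (T : Type) (e : nat -> T) (j : 'I_n) y v :
  upd e 1 y (varO1 j v) = upd (e \o varO j) 0 y v.
Proof.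
by case: v => [|v]; rewrite /upd /varO1 /= ?(negbTE (varO_neq1 _ _)).
Qed.

Definition avoid_cs (u : nat) : pform ar :=
  PBigAnd (fun i => PNot (PEqO ar u (varC i))) (iota 0 m).

Definition witness_clause (j : 'I_n) : pform ar :=
  PAnd (rename (varO j) (slot j) (phi j))
  (PAnd (PBigAnd (fun w => PEqP ar (slot j w) (slot j 0)) (fvP (phi j)))
  (PAnd (PBigAnd (fun l : 'I_n =>
           PBigAnd (fun v => PNot (PEqO ar (varO j 0) (varO l v))) (param_vars l))
         (enum 'I_n))
  (PAnd (avoid_cs (varO j 0))
        (PBigAnd (fun l : 'I_n => PNot (PEqP ar (slot j 0) (slot l 0)))
                 [seq l <- enum 'I_n | l != j])))).

Definition no_common_realization : pform ar :=
  PNot (PExO 1 (PAnd (PBigAnd (fun j : 'I_n => rename (varO1 j) (slot j) (phi j)) (enum 'I_n))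
                     (avoid_cs 1))).

Definition config_formula : pform ar :=
  PAnd (PBigAnd witness_clause (enum 'I_n)) no_common_realization.

Variable M : pfc_struct ar.
Implicit Types (E : nat -> sortO M) (EP : nat -> sortP M).

Lemma psat_avoid_cs E EP u :
  psat E EP (avoid_cs u) <-> forall i, i < m -> E u <> E (varC i).
Proof.
rewrite psat_bigand; split=> avoid i; first by move=> im; apply: avoid; rewrite mem_iota.
by rewrite mem_iota => /andP [_ im]; apply: avoid.
Qed.

Lemma psat_witness_clause E EP j :
  psat E EP (witness_clause j) <->
  [/\ psat (E \o varO j) (EP \o slot j) (phi j),
      {in fvP (phi j), forall w, EP (slot j w) = EP (slot j 0)},
      forall l v, v \in fvO (phi l) -> v != 0 -> E (varO j 0) <> E (varO l v),
      forall i, i < m -> E (varO j 0) <> E (varC i)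
    & forall l, l != j -> EP (slot j 0) <> EP (slot l 0)].
Proof.
rewrite /witness_clause !psat_and psat_rename; [|exact: varO_inj|exact: slot_inj].
rewrite psat_avoid_cs !psat_bigand.
have avoidE : (forall l, l \in enum 'I_n -> psat E EP (PBigAnd
                 (fun v => PNot (PEqO ar (varO j 0) (varO l v))) (param_vars l))) <->
              (forall l v, v \in fvO (phi l) -> v != 0 -> E (varO j 0) <> E (varO l v)).
  split=> [avoid l v vphi v0 | avoid l _]; last first.
    by apply/psat_bigand => v; rewrite mem_filter => /andP [v0 vphi]; exact: avoid.
  by have /psat_bigand := avoid l (mem_enum _ l); apply; rewrite mem_filter v0.
have distinctE : (forall l, l \in [seq l <- enum 'I_n | l != j] ->
                   psat E EP (PNot (PEqP ar (slot j 0) (slot l 0)))) <->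
                 (forall l, l != j -> EP (slot j 0) <> EP (slot l 0)).
  split=> dist l; first by move=> lj; apply: dist; rewrite mem_filter lj mem_enum.
  by rewrite mem_filter => /andP [lj _]; exact: dist.
rewrite avoidE distinctE.
by split=> [[? [? [? [? ?]]]] | [? ? ? ? ?]].
Qed.

Lemma psat_no_common_realization E EP :
  psat E EP no_common_realization <->
  ~ exists y, (forall j : 'I_n, psat (upd (E \o varO j) 0 y) (EP \o slot j) (phi j)) /\
              forall i, i < m -> y <> E (varC i).
Proof.
rewrite /no_common_realization /=.
suff yE y : psat (upd E 1 y) EP (PAnd (PBigAnd (fun j : 'I_n =>
                 rename (varO1 j) (slot j) (phi j)) (enum 'I_n)) (avoid_cs 1)) <->
            (forall j : 'I_n, psat (upd (E \o varO j) 0 y) (EP \o slot j) (phi j)) /\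
            forall i, i < m -> y <> E (varC i).
  by split=> none [y /yE yphi]; apply: none; exists y.
rewrite psat_and psat_avoid_cs psat_bigand.
have yC i : upd E 1 y 1 <> upd E 1 y (varC i) <-> y <> E (varC i).
  by rewrite /upd eqxx.
have yphi (j : 'I_n) : psat (upd E 1 y) EP (rename (varO1 j) (slot j) (phi j)) <->
              psat (upd (E \o varO j) 0 y) (EP \o slot j) (phi j).
  rewrite psat_rename; [|exact: varO1_inj|exact: slot_inj].
  by apply: psat_agree => // v _; rewrite /= upd_varO1.
split=> [[yphis yc] | [yphis yc]]; split=> [j|i im].
- by apply/yphi/yphis; rewrite mem_enum.
- by apply/yC/yc.
- by move=> _; apply/yphi/yphis.
- by apply/yC/yc.
Qed.

Definition ord_of (w : nat) : 'I_n := Ordinal (ltn_pmod w n_gt0).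

Lemma ord_of_slot (j : 'I_n) v : ord_of (slot j v) = j.
Proof. by apply: val_inj; rewrite /= /slot modnMDl modn_small. Qed.

Lemma slot_divn (j : 'I_n) v : slot j v %/ n = v.
Proof. by rewrite /slot divnMDl // divn_small // addn0. Qed.

Definition encodeO (e : 'I_n -> nat -> sortO M) (cs : seq (sortO M)) d (u : nat) :=
  if odd u then nth d cs (u - 3)./2 else e (ord_of u./2) (u./2 %/ n).

Lemma encodeO_varO e cs d (j : 'I_n) v : encodeO e cs d (varO j v) = e j v.
Proof. by rewrite /encodeO /varO odd_double doubleK ord_of_slot slot_divn. Qed.

Lemma encodeO_varC e cs d i : encodeO e cs d (varC i) = nth d cs i.
Proof. by rewrite /encodeO /varC /= negbK odd_double /= -addn3 addnK doubleK. Qed.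

Lemma isolated_config_formula a b x cs :
  size cs = m -> @isolated_config M a b x cs -> exists E EP, psat E EP config_formula.
Proof.
move=> cs_m [b_inj xphi xF none].
pose E := encodeO (fun j => upd (a j) 0 (x j)) cs (x (Ordinal n_gt0)).
pose EP w := b (ord_of w).
have EP_slot (j : 'I_n) w : EP (slot j w) = b j by rewrite /EP ord_of_slot.
have E_varO (j : 'I_n) v : E (varO j v) = upd (a j) 0 (x j) v by exact: encodeO_varO.
have E_varC i : E (varC i) = nth (x (Ordinal n_gt0)) cs i by exact: encodeO_varC.
exists E, EP; rewrite /config_formula psat_and psat_bigand psat_no_common_realization.
split=> [j _ | [y [yphi ycs]]].
  apply/psat_witness_clause; split.
  - by apply: (iffLR (psat_agree _ _) (xphi j)) => v _; rewrite /= ?E_varO ?EP_slot.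
  - by move=> w _; rewrite !EP_slot.
  - move=> l v vphi v0; rewrite !E_varO /upd eqxx (negbTE v0) => xa.
    by apply: (xF j); apply/List.in_or_app; right; apply/In_params; exists l, v.
  - move=> i im; rewrite E_varO E_varC /upd eqxx => xc.
    by apply: (xF j); apply/List.in_or_app; left; rewrite xc; apply: In_nth; rewrite cs_m.
  - by move=> l lj; rewrite !EP_slot => /b_inj jl; rewrite jl eqxx in lj.
apply: none; exists y; split=> [j | ].
  apply: (iffLR (psat_agree _ _)) (yphi j) => v _ /=; last by rewrite EP_slot.
  by rewrite /upd /=; case: eqP => // /eqP v0; rewrite E_varO /upd (negbTE v0).
apply/(notin_nth (x (Ordinal n_gt0))) => i; rewrite cs_m => im.
by rewrite -E_varC; exact: ycs.
Qed.

Lemma config_formula_isolated E EP :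
  psat E EP config_formula ->
  isolated_config (fun j => E \o varO j) (fun j => EP (slot j 0))
                  (fun j => E (varO j 0)) (mkseq (E \o varC) m).
Proof.
move=> /psat_and [/psat_bigand witness /psat_no_common_realization none].
have clause j := (psat_witness_clause E EP j).1 (witness j (mem_enum _ j)).
have realize (j : 'I_n) e : psat e (EP \o slot j) (phi j) <->
                            psat e (fun _ => EP (slot j 0)) (phi j).
  by have [_ sameP _ _ _] := clause j; apply: psat_agree.
have In_cs y : List.In y (mkseq (E \o varC) m) -> exists2 i, i < m & y = E (varC i).
  by move=> /(nth_In y) [i]; rewrite size_mkseq => im <-; exists i; rewrite ?nth_mkseq.
split.
- move=> j l /= bjl; apply/eqP; apply: contraT => jl.
  by have [_ _ _ _ distinct] := clause l; case: (distinct j jl (esym bjl)).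
- move=> j; apply/realize; have [copy _ _ _ _] := clause j.
  by apply: (iffLR (psat_agree _ _)) copy => // -[|v].
- move=> j /List.in_app_iff [/In_cs [i im xc] | /In_params [l [v [vphi v0 xa]]]].
    by have [_ _ _ avoid _] := clause j; exact: avoid im xc.
  by have [_ _ avoid _ _] := clause j; exact: avoid l v vphi v0 xa.
- move=> [y [yphi ycs]]; apply: none; exists y; split=> [j | i im yc].
    by apply/realize; apply: (iffLR (psat_agree _ _)) (yphi j).
  apply: ycs; rewrite yc.
  have <- : nth y (mkseq (E \o varC) m) i = E (varC i) by rewrite nth_mkseq.
  by apply: In_nth; rewrite size_mkseq.
Qed.

End ConfigFormula.

Lemma elem_equiv_sat k (ar : 'I_k -> nat) (M N : pfc_struct ar) (f : pform ar) :
  elem_equiv M N ->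
  (exists eO eP, psat (M := M) eO eP f) -> exists eO eP, psat (M := N) eO eP f.
Proof.
move=> MN [eO [eP sat]]; apply: NNPP => unsat.
by apply: ((MN (PNot f)).2 _ eO eP sat) => eO' eP' sat'; apply: unsat; exists eO', eP'.
Qed.

Theorem lemma4p7 (k : nat) (ar : 'I_k -> nat) (K : Lclass ar)
  (HK : fraisse_class K) (HSAP : SAP K)
  (N : pfc_struct ar) (HN : model_of_Tpfc K N)
  (n : nat) (hn : 0 < n) (phi : 'I_n -> pform ar)
  (a : 'I_n -> nat -> sortO N) (b : 'I_n -> sortP N) (hb : injective b) :
  (forall j : 'I_n,
     infinite_pred (fun x : sortO N => psat (upd (a j) 0 x) (fun _ => b j) (phi j))) ->
  infinite_pred (fun x : sortO N =>
     forall j : 'I_n, psat (upd (a j) 0 x) (fun _ => b j) (phi j)).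
Proof.
move=> infinite [s s_common]; have [M0 [M0_lim NM0]] := HN.
have [x xphi] := choice _ (fun j => infinite_pred_avoid (s ++ params phi a) (infinite j)).
have isolated : isolated_config phi a b x s.
  split=> // [j | j | [y [yphi ys]]]; [exact: (xphi j).1 | exact: (xphi j).2 |].
  exact/ys/s_common.
have [E [EP sat]] :=
  elem_equiv_sat NM0 (isolated_config_formula hn (erefl (size s)) isolated).
exact: fraisse_limit_no_isolated_config M0_lim (config_formula_isolated hn sat).
Qed.
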